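(* Let $n$ be an even integer and $m$ an integer with $\frac n4<m<\frac n3$. Let $x\in\{0,1\}^n$ and let $\ell=|\{j\in[1..2m+2]\mid x_j=1\}|$ be the number of ones among the first $2m+2$ positions of $x$, and suppose $1\le\ell\le 2m+1$. Then for any unary unbiased variation operator $V$, $\Pr[\mathrm{LO}(V(x))\ge 2m+2]\le\frac2n$.
   Context: $\mathrm{LO}(x)=\sum_{r=1}^n\prod_{s=1}^r x_s$ is the number of leading ones of $x\in\{0,1\}^n$. A unary unbiased variation operator $V$ assigns to each $x\in\{0,1\}^n$ a probability distribution $V(x)$ on $\{0,1\}^n$ such that for all $x,y,z$, $\Pr[y=V(x)]=\Pr[y\oplus z=V(x\oplus z)]$, and for all permutations $\sigma$ of $[1..n]$, $\Pr[y=V(x)]=\Pr[\sigma(y)=V(\sigma(x))]$, where $\sigma(x)=(x_{\sigma(1)},\dots,x_{\sigma(n)})$. *)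

From HB Require Import structures.
From mathcomp Require Import all_boot all_order all_algebra all_fingroup.
Set Implicit Arguments. Unset Strict Implicit. Unset Printing Implicit Defensive.
Import Order.TTheory GRing.Theory Num.Theory.

(* Bit strings of length n: positions are 0-indexed ('I_n), i.e. position j
   of the paper (1..n) is index j-1 here. *)
Definition bits (n : nat) := {ffun 'I_n -> bool}.

Definition LO (n : nat) (x : bits n) : nat :=
  \sum_(r < n) \prod_(s < n | s <= r) (x s : nat).

Definition bxor (n : nat) (x z : bits n) : bits n := [ffun i => x i (+) z i].

Definition bperm (n : nat) (s : {perm 'I_n}) (x : bits n) : bits n :=
  [ffun i => x (s i)].

(* A unary variation operator: V x y = Pr[y = V(x)], a probability
   distribution on bits n for each x. *)
Definition is_variation_op (R : numDomainType) (n : nat) (V : bits n -> bits n -> R) :=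
  forall x : bits n, (forall y, 0 <= V x y)%R /\ (\sum_(y : bits n) V x y = 1)%R.

Definition is_unbiased (R : numDomainType) (n : nat) (V : bits n -> bits n -> R) :=
  (forall x y z : bits n, V x y = V (bxor x z) (bxor y z)) /\
  (forall (s : {perm 'I_n}) (x y : bits n), V x y = V (bperm s x) (bperm s y)).

Definition ones_prefix (n k : nat) (x : bits n) : nat :=
  #|[set j : 'I_n | (j < k) && x j]|.

From HB Require Import structures.
From mathcomp Require Import all_boot all_order all_algebra all_fingroup.
From mathcomp Require Import zify.
Import Order.TTheory GRing.Theory Num.Theory.
Set Implicit Arguments. Unset Strict Implicit. Unset Printing Implicit Defensive.

(** Let k = 2m+2 and let Z(y) be the set of zero positions of y among its
   first k bits; LO(y) >= k forces Z(y) = {}.  For i, j < k with x_i <> x_j,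
   the map that swaps y_i and y_j and flips both is the conjugate of the
   transposition (i j) by xor with x, so by unbiasedness it preserves the
   distribution V(x); it maps the event Z(y) = {i, j} onto Z(y) = {}.  Letting
   i range over the zeros and j over the ones of x among the first k bits gives
   1 + #zeros * #ones >= k disjoint events of equal probability, hence
   Pr[LO(V(x)) >= k] <= 1/k <= 2/n. *)

Section SumBounds.
Local Open Scope ring_scope.
Variables (R : numDomainType) (T : finType) (p : T -> R).
Hypothesis p_ge0 : forall y, 0 <= p y.

Lemma ler_sum_subpred (P Q : pred T) : (forall y, P y -> Q y) ->
  \sum_(y | P y) p y <= \sum_(y | Q y) p y.
Proof.
move=> PQ; rewrite big_mkcond [leRHS]big_mkcond; apply: ler_sum => y _.
by case: (boolP (P y)) => [/PQ -> | _] //; case: ifP.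
Qed.

Lemma sum_fibers_le (U : finType) (f : T -> U) (I : {set U}) :
  \sum_(u in I) \sum_(y | f y == u) p y <= \sum_y p y.
Proof.
apply: le_trans (ler_sum_subpred (P := fun y => f y \in I) (Q := xpredT) _) => //.
rewrite (partition_big f (mem I)) //=; apply: ler_sum => u uI.
rewrite [leRHS](eq_bigl (fun y => f y == u)) // => y.
by case: eqP => [-> | _]; rewrite ?uI ?andbF.
Qed.
End SumBounds.

Section Bits.
Variable n : nat.
Implicit Types (x y : bits n) (i j t : 'I_n).

Lemma card_ord_lt (k : nat) : k <= n -> #|[set j : 'I_n | j < k]| = k.
Proof.
move=> kn; rewrite -sum1dep_card -(big_ord_widen n (fun _ => 1) kn).
by rewrite sum_nat_const card_ord muln1.
Qed.

Definition swap_flip i j y : bits n :=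
  [ffun t => y (tperm i j t) (+) (t \in [set i; j])].

Lemma unbiased_conj_perm (R : numDomainType) (V : bits n -> bits n -> R)
    (s : {perm 'I_n}) x y :
  is_unbiased V -> V x y = V x (bxor (bperm s (bxor y x)) x).
Proof.
case=> V_xor V_perm; set z0 : bits n := [ffun=> false].
have xx : bxor x x = z0 by apply/ffunP => t; rewrite !ffunE addbb.
have z0x : bxor z0 x = x by apply/ffunP => t; rewrite !ffunE.
have sz0 : bperm s z0 = z0 by apply/ffunP => t; rewrite !ffunE.
by rewrite [LHS](V_xor x y x) xx (V_perm s) sz0 (V_xor z0 _ x) z0x.
Qed.

Lemma bperm_tperm_swap_flip i j x y : x i != x j ->
  bxor (bperm (tperm i j) (bxor y x)) x = swap_flip i j y.
Proof.
move=> xij; apply/ffunP => t; rewrite !ffunE -addbA !inE.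
case: tpermP => [-> | -> | /eqP/negbTE -> /eqP/negbTE ->] /=; rewrite ?eqxx ?orbT ?addbb //.
all: by move: xij; case: (x i); case: (x j).
Qed.

Lemma swap_flipK i j : involutive (swap_flip i j).
Proof.
move=> y; apply/ffunP => t.
by rewrite !ffunE tpermK (perm_closed _ (tperm_on i j)) -addbA addbb addbF.
Qed.

Lemma unbiased_swap_flip (R : numDomainType) (V : bits n -> bits n -> R) i j x y :
  is_unbiased V -> x i != x j -> V x (swap_flip i j y) = V x y.
Proof.
by move=> V_unb xij; rewrite -(bperm_tperm_swap_flip y xij) -unbiased_conj_perm.
Qed.

Definition prefix_zeros (k : nat) y := [set t : 'I_n | (t < k) && ~~ y t].

Lemma LO_le_zero y t : ~~ y t -> LO y <= t.
Proof.
move=> yt; rewrite /LO (bigID (fun r : 'I_n => r < t)) /= [X in _ + X]big1 ?addn0.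
- rewrite -[leqRHS](card_ord_lt (ltnW (ltn_ord t))) -sum1dep_card.
  apply: leq_sum => r _; elim/big_ind: _ => // [a b a1 b1 | s _]; last exact: leq_b1.
  by rewrite -(muln1 1) leq_mul.
- by move=> r; rewrite -leqNgt => tr; rewrite (bigD1 t) //= (negbTE yt).
Qed.

Lemma prefix_zeros_LO k y : k <= LO y -> prefix_zeros k y = set0.
Proof.
move=> kLO; apply/setP => t; rewrite !inE; case: (boolP (y t)) => [|yt]; rewrite ?andbF //.
by rewrite andbT ltnNge (leq_trans kLO (LO_le_zero yt)).
Qed.

Lemma prefix_zeros_swap_flip k i j y : i < k -> j < k ->
  (prefix_zeros k (swap_flip i j y) == set0) = (prefix_zeros k y == [set i; j]).
Proof.
move=> ik jk; set S := [set i; j].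
have tpermS t : (tperm i j t \in S) = (t \in S) := perm_closed _ (tperm_on i j).
have S_lt t : t \in S -> t < k by rewrite !inE => /orP[] /eqP ->.
have tpermSC t : t \notin S -> tperm i j t = t.
  by rewrite !inE negb_or => /andP[ti tj]; apply: tpermD; rewrite eq_sym.
have tperm_lt t : t \in S -> tperm i j t < k by rewrite -tpermS => /S_lt.
apply/eqP/eqP => /setP zerosE; apply/setP => t; rewrite ?in_set0 in_set ?ffunE -?/S.
- case: (boolP (t \in S)) => tS.
  + have := zerosE (tperm i j t); rewrite in_set in_set0 ffunE tpermK tpermS tS.
    by rewrite addbT negbK tperm_lt ?S_lt //= => ->.
  + by have := zerosE t; rewrite in_set in_set0 ffunE tpermSC // (negbTE tS) addbF => ->.
- case: (boolP (t \in S)) => tS.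
  + have := zerosE (tperm i j t); rewrite in_set tpermS tS tperm_lt //=.
    by move/negbTE ->; rewrite andbF.
  + by have := zerosE t; rewrite in_set tpermSC // (negbTE tS) addbF => ->.
Qed.

Lemma card_prefix_zeros k x : k <= n -> #|prefix_zeros k x| + ones_prefix k x = k.
Proof.
move=> kn; rewrite /ones_prefix -[RHS](card_ord_lt kn) addnC.
rewrite -(cardsID [set j : 'I_n | x j] [set j : 'I_n | j < k]).
by congr (_ + _); apply: eq_card => j; rewrite !inE andbC.
Qed.

End Bits.

Section UnbiasedPrefix.
Local Open Scope ring_scope.
Variables (R : numDomainType) (n k : nat) (V : bits n -> bits n -> R) (x : bits n).
Hypotheses (V_op : is_variation_op V) (V_unb : is_unbiased V).

Lemma prob_prefix_zeros_pair (i j : 'I_n) : (i < k)%N -> (j < k)%N -> x i != x j ->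
  \sum_(y | prefix_zeros k y == [set i; j]) V x y =
  \sum_(y | prefix_zeros k y == set0) V x y.
Proof.
move=> ik jk xij; rewrite [RHS](reindex_inj (inv_inj (swap_flipK i j))) /=.
by apply: eq_big => y; rewrite ?prefix_zeros_swap_flip ?(unbiased_swap_flip _ V_unb xij).
Qed.

Lemma prob_prefix_ones_le : (k <= n)%N -> (0 < ones_prefix k x < k)%N ->
  (\sum_(y | prefix_zeros k y == set0) V x y) * k%:R <= 1.
Proof.
move=> kn /andP[ones_gt0 ones_lt]; set p0 := \sum_(y | _) _.
have [V_ge0 V_sum1] := V_op x.
set Z := prefix_zeros k x; set O := [set j : 'I_n | (j < k)%N && x j].
have pairE : {in setX Z O, forall p,
    \sum_(y | prefix_zeros k y == [set p.1; p.2]) V x y = p0}.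
  move=> [i j]; rewrite !inE /= => /andP[/andP[ik xi] /andP[jk xj]].
  by apply: prob_prefix_zeros_pair; rewrite // xj (negbTE xi).
have pair_inj : {in setX Z O &, injective (fun p => [set p.1; p.2])}.
  move=> [i j] [i' j']; rewrite !inE /=.
  move=> /andP[/andP[_ /negbTE xi] /andP[_ xj]].
  move=> /andP[/andP[_ /negbTE xi'] /andP[_ xj']] ij_eq.
  move: (set21 i j) (set22 i j); rewrite ij_eq !inE.
  by case/orP=> /eqP ei; case/orP=> /eqP ej; subst; congruence.
have set0_notin : set0 \notin [set [set p.1; p.2] | p in setX Z O].
  by apply/imsetP => -[p _ /setP /(_ p.1)]; rewrite !inE eqxx.
have := sum_fibers_le V_ge0 (prefix_zeros k) (set0 |: [set [set p.1; p.2] | p in setX Z O]).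
rewrite big_setU1 //= big_imset //= (eq_bigr _ pairE) sumr_const cardsX V_sum1.
apply: le_trans; rewrite -mulrS -[leRHS]mulr_natr ler_wpM2l ?sumr_ge0 // ler_nat.
have := card_prefix_zeros x kn; rewrite -/Z => cardZO.
have cardO : #|O| = ones_prefix k x by [].
nia.
Qed.

End UnbiasedPrefix.

Theorem lemma14 (R : realFieldType) (n m : nat)
  (V : bits n -> bits n -> R) (x : bits n) :
  ~~ odd n -> n < 4 * m -> 3 * m < n ->
  1 <= ones_prefix (2 * m + 2) x <= 2 * m + 1 ->
  is_variation_op V -> is_unbiased V ->
  (\sum_(y : bits n | (2 * m + 2 <= LO y)%N) V x y <= 2%:R / n%:R)%R.
Proof.
move=> _ n_lt_4m n_gt_3m /andP[ones_ge1 ones_le] V_op V_unb.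
set k := 2 * m + 2 in ones_ge1 ones_le *.
have [V_ge0 _] := V_op x.
have kn : k <= n by rewrite /k; lia.
have ones_bd : 0 < ones_prefix k x < k by apply/andP; split; lia.
have p0k := prob_prefix_ones_le V_op V_unb kn ones_bd.
apply: le_trans (ler_sum_subpred V_ge0 (Q := fun y => prefix_zeros k y == set0) _) _.
  by move=> y /prefix_zeros_LO ->.
rewrite ler_pdivlMr ?ltr0n; last by lia.
apply: (@le_trans _ _ ((\sum_(y | prefix_zeros k y == set0) V x y) * (2 * k)%:R)%R).
  by rewrite ler_wpM2l ?sumr_ge0 // ler_nat /k; lia.
by rewrite natrM mulrCA -[leRHS]mulr1 ler_wpM2l.
Qed.
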